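(* Let $D$ be a positive integer and $G$ a connected graph of maximum degree at most $D$. Then for every set $S$ of $n$ vertices of $G$, there exist at least $\lceil (n-1)/D\rceil$ pairwise vertex-disjoint paths in $G$, each having two distinct endpoints, both of which belong to $S$. *)

From mathcomp Require Import all_boot.
Set Implicit Arguments. Unset Strict Implicit. Unset Printing Implicit Defensive.

Section Graphs.
Variable T : finType.

Definition simple_graph (e : rel T) : Prop := symmetric e /\ irreflexive e.

Definition neighbours (e : rel T) (v : T) : {set T} := [set u | e v u].
Definition max_degree_le (e : rel T) (D : nat) : Prop :=
  forall v : T, #|neighbours e v| <= D.

Definition connected_graph (e : rel T) : Prop := forall x y : T, connect e x y.

Definition S_path (e : rel T) (S : {set T}) (p : seq T) : bool :=
  if p is x :: s then
    [&& path e x s, uniq p, x != last x s, x \in S & last x s \in S]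
  else false.

Definition disjoint_S_paths (e : rel T) (S : {set T}) (P : seq (seq T)) : bool :=
  all (S_path e S) P && pairwise (fun p q : seq T => [disjoint p & q]) P.
End Graphs.

(* ceiling of a / b for b > 0 (natural numbers) *)
Definition ceil_div (a b : nat) : nat := (a + b.-1) %/ b.

From mathcomp Require Import all_boot zify.
Set Implicit Arguments. Unset Strict Implicit. Unset Printing Implicit Defensive.

(* Fix a breadth-first spanning tree rooted at r, given by a parent map p that
   strictly decreases the depth h.  Let v be a deepest vertex whose subtree
   contains two vertices of S.  Every child subtree of v contains at most one
   vertex of S, so the subtree of v contains at most 1 + #children vertices of
   S, and #children <= D - 1 unless v is the root.  Join two of these vertices
   by a path inside the subtree, delete the subtree (which keeps the rest of
   the tree closed under p) and recurse: each path costs at most D vertices of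
   S, except the last one, which may use all the remaining D + 1. *)

Lemma ceil_div0 D : 0 < D -> ceil_div 0 D = 0.
Proof. by move=> D0; rewrite /ceil_div add0n divn_small // prednK. Qed.

Lemma ceil_div_leS a b D : 0 < D -> a <= D + b -> ceil_div a D <= (ceil_div b D).+1.
Proof.
move=> D0 le_ab; rewrite /ceil_div.
apply: (@leq_trans ((b + D.-1 + 1 * D) %/ D)); last by rewrite divnDMl // addn1.
by apply: leq_div2r; rewrite mul1n addnAC leq_add2r addnC.
Qed.

Section Graph.
Variables (T : finType) (e : rel T).
Implicit Types (A W : {set T}) (x y v c : T).

Definition induced (A : {set T}) : rel T := [rel x y | [&& x \in A, y \in A & e x y]].

Lemma induced_sym A : symmetric e -> symmetric (induced A).
Proof. by move=> esym x y; rewrite /induced /= esym andbCA andbA. Qed.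

Lemma path_induced_sub A x (s : seq T) :
  x \in A -> path (induced A) x s -> {subset x :: s <= A}.
Proof.
elim: s x => [|y s IHs] x xA /=; first by move=> _ z; rewrite inE => /eqP->.
case/andP=> /and3P[_ yA _] /(IHs _ yA) sA z; rewrite inE => /orP[/eqP->//|].
exact: sA.
Qed.

Lemma exists_S_path_within (S A : {set T}) a b :
  a \in S -> b \in S -> a != b -> a \in A -> connect (induced A) a b ->
  exists q, S_path e S q /\ {subset q <= A}.
Proof.
move=> aS bS ab aA /connectP[s ps bE]; rewrite {}bE in bS ab.
case/shortenP: ps bS ab => s' ps' us' _ bS ab.
exists (a :: s'); split; last exact: path_induced_sub ps'.
by rewrite /S_path us' ab aS bS (sub_path _ ps') // => x y /and3P[].
Qed.

Definition parent_tree (r : T) (p : T -> T) (h : T -> nat) : Prop :=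
  p r = r /\ forall x, x != r -> e x (p x) /\ h (p x) < h x.

Lemma exists_parent_tree r : connected_graph e -> exists p h, parent_tree r p h.
Proof.
move=> conn.
pose fix ball k : {set T} :=
  if k is k'.+1 then ball k' :|: [set x | [exists y in ball k', e x y]] else [set r].
have in_ball x : exists k, x \in ball k.
  have /connectP[s] := conn x r.
  elim: s x => [|y s IHs] x /=; first by move=> _ <-; exists 0; rewrite inE.
  case/andP=> exy ps /(IHs _ ps)[k yk]; exists k.+1.
  by rewrite /= !inE; apply/orP; right; apply/existsP; exists y; rewrite yk.
pose h x := ex_minn (in_ball x).
have h_ball x : x \in ball (h x) by rewrite /h; case: ex_minnP.
have h_min x k : x \in ball k -> h x <= k by rewrite /h; case: ex_minnP => m _; apply.
pose p x := if x == r then r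
  else if [pick y | (y \in ball (h x).-1) && e x y] is Some y then y else r.
exists p, h; split=> [|x xr]; first by rewrite /p eqxx.
rewrite /p (negbTE xr).
case Ex: (h x) (h_ball x) => [|m] /=; first by rewrite inE (negbTE xr).
have x_out : x \notin ball m by apply/negP => /h_min; rewrite Ex ltnn.
rewrite inE (negbTE x_out) inE => /existsP[y /andP[ym exy]].
case: pickP => [z /andP[zm exz]|/(_ y)]; last by rewrite ym exy.
by rewrite exz (leq_ltn_trans (h_min _ _ zm)).
Qed.

Section ParentTree.
Variables (r : T) (p : T -> T) (h : T -> nat).
Hypothesis tree : parent_tree r p h.

Let p_root : p r = r := tree.1.
Let p_edge x (xr : x != r) : e x (p x) := (tree.2 x xr).1.
Let h_parent x (xr : x != r) : h (p x) < h x := (tree.2 x xr).2.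

Lemma fconnect_root y : fconnect p y r.
Proof.
elim: {y}(h y).+1 {-2}y (ltnSn (h y)) => // k IH y hy.
have [->|yr] := eqVneq y r; first exact: connect0.
apply: connect_trans (fconnect1 p y) (IH _ _).
exact: leq_trans (h_parent yr) hy.
Qed.

Definition p_closed (W : {set T}) : Prop := forall x, x \in W -> p x \in W.
Definition subtree (W : {set T}) v := [set y in W | fconnect p y v].
Definition children (W : {set T}) v := [set c in W | (p c == v) && (c != v)].

Lemma iter_p_closed W k y : p_closed W -> y \in W -> iter k p y \in W.
Proof. by move=> Wc yW; elim: k => //= k; apply: Wc. Qed.

Lemma subtree_sub W v : subtree W v \subset W.
Proof. by apply/subsetP => y; rewrite inE => /andP[]. Qed.

Lemma subtree_root W : subtree W r = W.
Proof. by apply/setP => y; rewrite inE fconnect_root andbT. Qed.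

Lemma mem_subtree_top W v y : p_closed W -> y \in subtree W v -> v \in W.
Proof. by move=> Wc; rewrite inE => /andP[yW /iter_findex <-]; apply: iter_p_closed. Qed.

Lemma p_closed_setD_subtree W v : p_closed W -> p_closed (W :\: subtree W v).
Proof.
move=> Wc x; rewrite !inE => /andP[xA xW]; rewrite Wc // andbT.
apply: contra xA => /andP[_ pxv]; rewrite xW.
exact: connect_trans (fconnect1 p x) pxv.
Qed.

Lemma card_setD_subtree W v : v \in W -> #|W :\: subtree W v| < #|W|.
Proof.
move=> vW; apply/proper_card/(sub_proper_trans _ (properD1 vW)).
apply/subsetP => x; rewrite !inE => /andP[xA ->]; rewrite andbT.
by apply: contraNneq xA => ->; rewrite vW connect0.
Qed.

Lemma connect_subtree W v y :
  p_closed W -> y \in subtree W v -> connect (induced (subtree W v)) y v.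
Proof.
move=> Wc; rewrite inE => /andP[yW /iter_findex].
move: (findex p y v) => k; elim: k y yW => [|k IHk] y yW.
  by move=> /= ->; apply: connect0.
rewrite iterSr => itv.
have [yr|yr] := eqVneq y r.
  by subst y; apply: IHk => //; move: itv; rewrite p_root.
apply: connect_trans (connect1 _) (IHk _ (Wc _ yW) itv).
rewrite /induced /= !inE yW Wc // p_edge // andbT -itv.
by rewrite (connect_trans (fconnect1 p y)) ?fconnect_iter.
Qed.

Lemma children_neq_root W v c : c \in children W v -> c != r.
Proof.
rewrite inE => /and3P[_ /eqP pc cv]; apply: contra cv => /eqP cr.
by rewrite -pc cr p_root.
Qed.

Lemma h_children W v c : c \in children W v -> h v < h c.
Proof.
move=> cC; move: (cC) (children_neq_root cC).
by rewrite inE => /and3P[_ /eqP <- _]; apply: h_parent.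
Qed.

Lemma card_children W v :
  symmetric e -> #|children W v| + (v != r) <= #|neighbours e v|.
Proof.
move=> esym.
have nbr c : c \in children W v -> e v c.
  move=> cC; move: (cC) (children_neq_root cC).
  by rewrite inE esym => /and3P[_ /eqP <- _]; apply: p_edge.
have [vr|vr] := eqVneq v r.
  by rewrite addn0; apply/subset_leq_card/subsetP => c /nbr; rewrite inE.
rewrite /neighbours [#|[set u | _]|](cardsD1 (p v)) inE p_edge // addnC leq_add2l.
apply/subset_leq_card/subsetP => c cC; rewrite !inE nbr // andbT.
by apply: contraTneq (h_children cC) => ->; rewrite -leqNgt ltnW ?h_parent.
Qed.

Lemma card_S_subtree (S W : {set T}) v : p_closed W ->
  (forall c, c \in children W v -> #|S :&: subtree W c| <= 1) ->
  #|S :&: subtree W v| <= 1 + #|children W v|.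
Proof.
move=> Wc small; rewrite (cardsD1 v); apply: leq_add; first exact: leq_b1.
pose below y := iter (findex p y v).-1 p y.
have belowP y : y \in (S :&: subtree W v) :\ v ->
    below y \in children W v /\ y \in S :&: subtree W (below y).
  rewrite !inE => /and4P[yv yS yW yv_conn].
  have itv := iter_findex yv_conn; have find_lt := findex_max yv_conn.
  rewrite /below; case Ek: (findex p y v) itv find_lt => [|k] itv find_lt.
    by rewrite -itv eqxx in yv.
  rewrite yS yW fconnect_iter iter_p_closed //= -iterS itv eqxx /=.
  split=> //; apply/eqP => itk; have := findex_iter (ltnW find_lt).
  by rewrite itk Ek; lia.
rewrite -(card_in_imset (f := below)).
  by apply/subset_leq_card/subsetP => _ /imsetP[y /belowP[cC _] ->].
move=> y1 y2 /belowP[cC y1S] /belowP[_ y2S] eq12.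
by apply: (card_le1_eqP (small _ cC)); rewrite // eq12.
Qed.

Section Paths.
Variables (D : nat) (S : {set T}).
Hypotheses (esym : symmetric e) (D_gt0 : 0 < D) (deg : max_degree_le e D).

Lemma split_S_path W : p_closed W -> 1 < #|S :&: W| ->
  exists v, [/\ v \in W, exists q, S_path e S q /\ {subset q <= subtree W v}
    & #|S :&: W| - 1 <= D + (#|S :&: (W :\: subtree W v)| - 1)].
Proof.
move=> Wc SW_gt1.
pose big v := 1 < #|S :&: subtree W v|.
have big_r : big r by rewrite /big subtree_root.
case: (arg_maxnP h big_r) => v big_v v_max; set A := subtree W v.
have [a [b [aSA bSA ab]]] := card_gt1P big_v.
move: aSA bSA; rewrite !in_setI => /andP[aS aA] /andP[bS bA].
have vW : v \in W := mem_subtree_top Wc aA.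
exists v; split=> //.
  apply: (exists_S_path_within aS bS ab aA).
  rewrite (connect_trans (connect_subtree Wc aA)) //.
  by rewrite (sym_connect_sym (induced_sym _ esym)) connect_subtree.
have small c : c \in children W v -> #|S :&: subtree W c| <= 1.
  move=> cC; rewrite leqNgt.
  by apply: contraL (h_children cC) => /v_max; rewrite -leqNgt.
have S_A := card_S_subtree Wc small.
have deg_v := leq_trans (card_children W v esym) (deg v).
have S_W : #|S :&: W| = #|S :&: A| + #|S :&: (W :\: A)|.
  by rewrite -(cardsID A (S :&: W)) setIDA -setIA (setIidPr (subtree_sub W v)).
have S_rest : v = r -> #|S :&: (W :\: A)| = 0.
  by move=> vr; rewrite /A vr subtree_root setDv setI0 cards0.
move: S_W S_rest S_A deg_v; rewrite /A.
by case: (eqVneq v r) => [-> S_W /(_ erefl)|_ S_W _]; lia.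
Qed.

Lemma disjoint_S_paths_within W : p_closed W ->
  exists P, [/\ disjoint_S_paths e S P, {in P, forall q, {subset q <= W}}
    & ceil_div (#|S :&: W| - 1) D <= size P].
Proof.
elim: {W}#|W|.+1 {-2}W (ltnSn #|W|) => // n IH W Wn Wc.
have [SW_le1|SW_gt1] := leqP #|S :&: W| 1.
  by exists [::]; split=> //; rewrite (_ : _ - 1 = 0) ?ceil_div0 //; lia.
have [v [vW [q [qS qA]] S_W]] := split_S_path Wc SW_gt1.
have [P [PS PW P_size]] := IH _ (leq_trans (card_setD_subtree vW) Wn)
  (p_closed_setD_subtree Wc).
exists (q :: P); split.
- rewrite /disjoint_S_paths /= qS; case/andP: PS => -> ->; rewrite /= andbT.
  apply/allP => q' q'P; rewrite disjoint_has; apply/hasPn => x /qA xA.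
  by apply/negP => /(PW _ q'P); rewrite inE xA.
- move=> q'; rewrite inE => /orP[/eqP-> x /qA|/PW q'W x /q'W]; last first.
    by rewrite inE => /andP[].
  exact: (subsetP (subtree_sub W v)).
- by apply: leq_trans (ceil_div_leS D_gt0 S_W) _; rewrite /= ltnS.
Qed.

End Paths.
End ParentTree.
End Graph.

Theorem lemma6p3 (T : finType) (e : rel T) (D : nat) (S : {set T}) :
  0 < D -> simple_graph e -> connected_graph e -> max_degree_le e D ->
  exists P : seq (seq T),
    disjoint_S_paths e S P /\ ceil_div (#|S| - 1) D <= size P.
Proof.
move=> D_gt0 [esym _] conn deg.
have [->|[r _]] := set_0Vmem S; first by exists [::]; rewrite cards0 ceil_div0.
have [p [h tree]] := exists_parent_tree r conn.
have [|P [PS _ P_size]] := disjoint_S_paths_within tree S esym D_gt0 deg (W := setT).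
  by move=> x _; rewrite in_setT.
by exists P; rewrite setIT in P_size.
Qed.
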